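(* Let $q \in Q$ and suppose $R_q$ contains a single simple path. Then the polytope $U(\mathcal{C}_q) = \{ x \in [0,1]^{|N|} : \sum_{j \in S} x_j \ge 1 \ \forall S \in \mathcal{C}_q\}$ is integral.
   Context: Let $G=(N,A)$ be a finite undirected graph with edge lengths $\ell_e > 0$, and let $d>0$ be the travel range, with $\ell_e \le d$ for every edge. A path is a sequence $r=(v_0,v_1,\dots,v_m)$, $m\ge 1$, of nodes in which consecutive nodes are joined by an edge (nodes may repeat); $r$ is simple if its nodes are distinct. For $x \in \{0,1\}^N$ ($x_j = 1$ meaning a charging station at node $j$), path $r$ is repeatedly traversable under $x$ if, letting $W=(v_0,\dots,v_m,v_{m-1},\dots,v_0)$ be the round trip along $r$, at least one node of $r$ has $x_j=1$ and, in the infinite periodic repetition of $W$, the distance travelled between any two consecutive visits to nodes with a station is at most $d$. Let $Q$ be a finite set of demands; each $q\in Q$ has a finite nonempty set $R_q$ of paths. For each $q \in Q$ and $r \in R_q$, $\mathcal{D}_{q,r}\subseteq 2^N$ is a family of node sets such that for every $x \in \{0,1\}^N$: $r$ is repeatedly traversable under $x$ if and only if $\sum_{j\in S} x_j \ge 1$ for all $S \in \mathcal{D}_{q,r}$. Define $\mathcal{C}_q = \{ \bigcup_{r \in R_q} S_r : S_r \in \mathcal{D}_{q,r} \text{ for each } r \in R_q\}$. *)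

From HB Require Import structures.
From mathcomp Require Import all_boot all_order all_algebra.
From mathcomp Require Import reals.
Set Implicit Arguments.
Unset Strict Implicit.
Unset Printing Implicit Defensive.
Import Order.TTheory GRing.Theory Num.Theory.
Local Open Scope ring_scope.

Section Defs.
Variables (R : realType) (N : finType).

Definition is_path (A : rel N) (r : seq N) : bool :=
  if r is v0 :: rest then (rest != [::]) && path A v0 rest else false.

(* one period of the infinite repetition of the round trip
   W = (v_0,...,v_m,v_{m-1},...,v_0): namely v_0,...,v_m,v_{m-1},...,v_1
   (the closing v_0 coincides with the next opening v_0). *)
Definition rt_cycle (r : seq N) : seq N :=
  r ++ rev (drop 1 (take (size r).-1 r)).

Definition rt_node (v0 : N) (rest : seq N) (k : nat) : N :=
  nth v0 (rt_cycle (v0 :: rest)) (k %% size (rt_cycle (v0 :: rest))).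

Definition rt_dist (ell : N -> N -> R) (v0 : N) (rest : seq N) (i j : nat) : R :=
  \sum_(i <= k < j) ell (rt_node v0 rest k) (rt_node v0 rest k.+1).

Definition rep_traversable (ell : N -> N -> R) (d : R) (r : seq N)
    (x : N -> bool) : Prop :=
  if r is v0 :: rest then
    (exists2 j, j \in r & x j) /\
    (forall i j : nat, (i < j)%N ->
       x (rt_node v0 rest i) -> x (rt_node v0 rest j) ->
       (forall k : nat, (i < k < j)%N -> ~~ x (rt_node v0 rest k)) ->
       rt_dist ell v0 rest i j <= d)
  else False.

Definition Cfam (Rq : seq (seq N)) (D : seq N -> {set {set N}}) (U : {set N}) : Prop :=
  exists f : seq N -> {set N},
    (forall r, r \in Rq -> f r \in D r) /\ U = \bigcup_(r <- Rq) f r.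

Definition Upoly (C : {set N} -> Prop) (x : N -> R) : Prop :=
  (forall j, 0 <= x j <= 1) /\ (forall S, C S -> 1 <= \sum_(j in S) x j).

(* vertex = extreme point of the polytope P *)
Definition extreme_point (P : (N -> R) -> Prop) (x : N -> R) : Prop :=
  P x /\ forall (y z : N -> R) (t : R), P y -> P z -> 0 < t < 1 ->
    (forall j, x j = t * y j + (1 - t) * z j) -> forall j, y j = x j /\ z j = x j.

Definition integral_polytope (P : (N -> R) -> Prop) : Prop :=
  forall x, extreme_point P x -> forall j, exists z : int, x j = z%:~R.

End Defs.

From HB Require Import structures.
From mathcomp Require Import all_boot all_order all_algebra.
From mathcomp Require Import reals.
From mathcomp Require Import zify lra.
From Stdlib Require Import Classical.
Set Implicit Arguments.
Unset Strict Implicit.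
Unset Printing Implicit Defensive.
Import Order.TTheory GRing.Theory Num.Theory.

(* Every S in C_q = D_{q,r} contains a segment J of consecutive nodes of r
   that itself contains a member of D_{q,r}: if r has no station outside S take
   J = r, otherwise take the nodes visited strictly between two consecutive
   stations that are too far apart; as the round trip moves one position of r
   at a time, these form a segment.  Hence U(C_q) is cut out by segment
   constraints only.  Such a polytope is integral: with s_k the prefix sums of
   x along r and h the distance to the nearest integer, the perturbation
   e_(v_k) = h(s_(k+1)) - h(s_k) keeps x + e and x - e feasible, because h is
   1-periodic and 1-Lipschitz; at a vertex e = 0, so every s_k, and hence every
   x_(v_k), is an integer.  Off r a vertex coordinate is 0 or 1 since it occurs
   in no constraint. *)

Lemma unit_step_window_image (W : nat -> nat) (M : nat) :
    (forall k, W k.+1 <= (W k).+1 /\ W k <= (W k.+1).+1) ->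
    (forall k, W k < M) ->
  forall lo n, exists a b, a <= b <= M /\
    forall p, (exists2 k, lo <= k < lo + n & W k = p) <-> a <= p < b.
Proof.
move=> Wstep Wlt lo; elim=> [|[|n] [a [b [leabM Wab]]]].
- by exists 0, 0; split=> // p; split=> [[k]|]; lia.
- exists (W lo), (W lo).+1; split; first by have := Wlt lo; lia.
  move=> p; split=> [[k kn <-]|Wp]; last by exists lo; [lia|lia].
  have -> : k = lo by lia.
  lia.
have Wlast : a <= W (lo + n) < b by apply/Wab; exists (lo + n) => //; lia.
have [Wup Wdown] := Wstep (lo + n); have Wnext := Wlt (lo + n).+1.
exists (minn a (W (lo + n).+1)), (maxn b (W (lo + n).+1).+1); split; first lia.
move=> p; split=> [[k kn <-]|].
  have [kn' | ->] : k < lo + n.+1 \/ k = (lo + n).+1 by lia.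
    have : a <= W k < b by apply/Wab; exists k => //; lia.
    lia.
  lia.
have [/Wab [k kn <-] _ | pab p_new] := boolP (a <= p < b).
  by exists k => //; lia.
by exists (lo + n).+1; lia.
Qed.

Definition rt_pos (m k : nat) : nat :=
  if k %% (2 * m) <= m then k %% (2 * m) else 2 * m - k %% (2 * m).

Lemma rt_pos_le m k : rt_pos m k <= m.
Proof. rewrite /rt_pos; case: ifP; lia. Qed.

Lemma rt_pos_step m k :
  rt_pos m k.+1 <= (rt_pos m k).+1 /\ rt_pos m k <= (rt_pos m k.+1).+1.
Proof.
have [-> | m_gt0] := posnP m.
  by rewrite /rt_pos !muln0 !modn0 !leqn0 /=; case: k.
have kmod : k %% (2 * m) < 2 * m by rewrite ltn_mod; lia.
have kS : k.+1 %% (2 * m) =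
    if (k %% (2 * m)).+1 < 2 * m then (k %% (2 * m)).+1 else 0.
  rewrite {1}(divn_eq k (2 * m)) -addnS (modnMDl (k %/ (2 * m))).
  case: ltnP => kmodS; first exact: modn_small.
  have -> : (k %% (2 * m)).+1 = 2 * m by lia.
  exact: modnn.
rewrite /rt_pos kS; move: kmod; set p := k %% (2 * m) => kmod.
case: (ltnP p.+1 (2 * m)) => wrap; case: (leqP p m) => up; rewrite ?leq0n.
all: try case: (leqP p.+1 m); lia.
Qed.

Lemma rt_node_pos (N : finType) (v0 : N) rest k :
  rt_node v0 rest k = nth v0 (v0 :: rest) (rt_pos (size rest) k).
Proof.
have [-> | rest_ne] := eqVneq rest [::].
  by rewrite /rt_node /rt_pos /= modn1 muln0 modn0; case: k.
have m_gt0 : 0 < size rest by rewrite lt0n size_eq0.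
rewrite /rt_node /rt_cycle; set r := v0 :: rest.
have size_r : size r = (size rest).+1 by [].
have -> : size (r ++ rev (drop 1 (take (size r).-1 r))) = 2 * size rest.
  by rewrite size_cat size_rev size_drop size_take size_r ltnSn; lia.
have : k %% (2 * size rest) < 2 * size rest by rewrite ltn_mod; lia.
rewrite /rt_pos nth_cat size_r; set p := k %% _ => p_lt.
case: (leqP p (size rest)) => p_le; first by rewrite ifT.
rewrite ifF; last by lia.
rewrite nth_rev size_drop size_take succnK ltnSn; last by lia.
rewrite nth_drop nth_take; last by lia.
congr nth; lia.
Qed.

Local Open Scope ring_scope.

Definition seg (N : finType) (r : seq N) (a b : nat) : {set N} :=
  [set u | (u \in r) && (a <= index u r < b)%N].

Definition is_seg (N : finType) (r : seq N) (S : {set N}) : Prop :=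
  exists a b, (a <= b <= size r)%N /\ S = seg r a b.

Section Segments.
Variables (N : finType) (r : seq N).
Hypothesis r_uniq : uniq r.

Lemma mem_seg_nth x0 a b p :
  (p < size r)%N -> (nth x0 r p \in seg r a b) = (a <= p < b)%N.
Proof. by move=> p_lt; rewrite inE mem_nth // index_uniq. Qed.

Lemma sum_seg (R : nmodType) x0 a b (F : N -> R) : (b <= size r)%N ->
  \sum_(u in seg r a b) F u = \sum_(a <= p < b) F (nth x0 r p).
Proof.
move=> b_le; rewrite big_mkcond (bigID [in r]) /= [X in _ + X]big1 ?addr0; last first.
  by move=> u /negbTE u_r; rewrite inE u_r.
rewrite -big_uniq //= (big_nth x0) big_mkord.
rewrite (big_nat_widen _ _ (size r)) // big_geq_mkord -big_mkcond /=.
by apply: eq_bigl => i; rewrite mem_seg_nth // andbC.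
Qed.
End Segments.

Lemma rt_window_seg (N : finType) (v0 : N) rest lo n : uniq (v0 :: rest) ->
  exists a b, (a <= b <= size (v0 :: rest))%N /\
    forall u, u \in seg (v0 :: rest) a b <->
      exists2 k, (lo <= k < lo + n)%N & rt_node v0 rest k = u.
Proof.
move=> r_uniq; set r := v0 :: rest.
have pos_lt k : (rt_pos (size rest) k < size r)%N by rewrite ltnS rt_pos_le.
have [a [b [ab_le posP]]] :=
  unit_step_window_image (rt_pos_step (size rest)) pos_lt lo n.
exists a, b; split=> // u; rewrite inE.
split=> [/andP[u_r /posP[k k_win pos_k]] | [k k_win <-]].
  by exists k => //; rewrite rt_node_pos pos_k nth_index.
by rewrite rt_node_pos mem_nth // index_uniq //; apply/posP; exists k.
Qed.

Section DistInt.
Variable R : realType.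
Implicit Types s t : R.

Definition dist_int t : R :=
  Num.min `|t - (Num.floor t)%:~R| `|t - (Num.floor t + 1)%:~R|.

Lemma dist_int_le t (n : int) : dist_int t <= `|t - n%:~R|.
Proof.
have /andP[fl_le lt_fl] := floor_itv t.
rewrite /dist_int ge_min; case: (lerP n (Num.floor t)) => [n_le | n_gt].
  have : n%:~R <= (Num.floor t)%:~R :> R by rewrite ler_int.
  rewrite (ger0_norm (x := t - _)) ?subr_ge0 // => n_le'.
  by apply/orP; left; apply: le_trans (ler_norm _); lra.
have n_ge : (Num.floor t + 1)%:~R <= n%:~R :> R by rewrite ler_int lezD1.
have fl1_ge : t - (Num.floor t + 1)%:~R <= 0 by rewrite intrD; lra.
rewrite (ler0_norm fl1_ge); apply/orP; right.
by rewrite -normrN; apply: le_trans (ler_norm _); lra.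
Qed.

Lemma dist_int_attained t : exists n : int, dist_int t = `|t - n%:~R|.
Proof. by rewrite /dist_int; case: leP; eexists. Qed.

Lemma dist_int_lipschitz s t : `|dist_int t - dist_int s| <= `|t - s|.
Proof.
suff one_side u v : dist_int u - dist_int v <= `|u - v|.
  rewrite ler_norml one_side andbT lerNl opprB distrC; exact: one_side.
have [n ->] := dist_int_attained v.
have := dist_int_le u n.
have : `|u - n%:~R| <= `|u - v| + `|v - n%:~R|.
  by rewrite -[u - n%:~R](subrKA v) ler_normD.
lra.
Qed.

Lemma dist_intD1 t : dist_int (t + 1) = dist_int t.
Proof.
apply/eqP; rewrite eq_le; apply/andP; split.
  have [n ->] := dist_int_attained t.
  by have := dist_int_le (t + 1) (n + 1); rewrite intrD opprD addrACA subrr addr0.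
have [n ->] := dist_int_attained (t + 1).
by have := dist_int_le t (n - 1); rewrite intrB opprB addrA.
Qed.

Lemma dist_int0 : dist_int 0 = 0.
Proof.
apply/le_anti/andP; split; first by have := dist_int_le 0 0; rewrite subr0 normr0.
by have [n ->] := dist_int_attained 0.
Qed.

Lemma dist_int_eq0 t : dist_int t = 0 -> exists n : int, t = n%:~R.
Proof.
have [n ->] := dist_int_attained t.
by move/eqP; rewrite normr_eq0 subr_eq0 => /eqP ->; exists n.
Qed.

Lemma dist_int_step s t : 0 <= t - s <= 1 ->
  `|dist_int t - dist_int s| <= Num.min (t - s) (1 - (t - s)).
Proof.
move=> /andP[st_ge0 st_le1]; rewrite le_min; apply/andP; split.
  by rewrite -(ger0_norm st_ge0); exact: dist_int_lipschitz.
rewrite -(dist_intD1 s); apply: le_trans (dist_int_lipschitz _ _) _.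
by rewrite ler0_norm; lra.
Qed.

Lemma dist_int_far s t : 1 <= t - s ->
  `|dist_int t - dist_int s| <= t - s - 1.
Proof.
move=> st_ge1; rewrite -(dist_intD1 s); apply: le_trans (dist_int_lipschitz _ _) _.
by rewrite ger0_norm; lra.
Qed.

End DistInt.

Lemma ler_sum_subset (R : numDomainType) (N : finType) (F : N -> R) (A B : {set N}) :
  (forall u, 0 <= F u) -> A \subset B -> \sum_(u in A) F u <= \sum_(u in B) F u.
Proof.
move=> F_ge0 /setIidPr AB; rewrite [leRHS](big_setID A) /= AB lerDl.
exact: sumr_ge0.
Qed.

Section Polytopes.
Variables (R : realType) (N : finType).
Implicit Types (C : {set N} -> Prop) (P : (N -> R) -> Prop) (x e : N -> R).

Lemma Upoly_refine C C' x : (forall S, C S -> exists2 J, C' J & J \subset S) ->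
  Upoly C' x -> Upoly C x.
Proof.
move=> CC' [x01 C'x]; split=> // S /CC'[J /C'x J_ge1 JS].
apply: le_trans J_ge1 (ler_sum_subset _ JS) => u.
by case/andP: (x01 u).
Qed.

Lemma integral_polytope_ext P P' : (forall x, P x <-> P' x) ->
  integral_polytope P -> integral_polytope P'.
Proof.
move=> PP' intP x [/PP' Px x_ext]; apply: intP; split=> // y z t /PP' Py /PP' Pz.
exact: x_ext.
Qed.

Lemma extreme_point_perturb C x e : extreme_point (Upoly C) x ->
    (forall u, `|e u| <= Num.min (x u) (1 - x u)) ->
    (forall S, C S -> `|\sum_(u in S) e u| <= \sum_(u in S) x u - 1) ->
  forall u, e u = 0.
Proof.
move=> [[x01 Cx] x_ext] e_le e_sum.
have shift (c : R) : `|c| <= 1 -> Upoly C (fun u => x u + c * e u).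
  move=> c_le; have ce_le v : `|c * v| <= `|v| by rewrite normrM ler_piMl.
  split=> [u | S CS].
    have := le_trans (ce_le (e u)) (e_le u); rewrite le_min !ler_norml.
    by case/andP: (x01 u); lra.
  rewrite big_split /= -mulr_sumr.
  have := le_trans (ce_le _) (e_sum S CS); have := Cx S CS; rewrite ler_norml; lra.
have half : 0 < (1 / 2 : R) < 1 by apply/andP; split; lra.
have mid v : x v = 1 / 2 * (x v + 1 * e v) + (1 - 1 / 2) * (x v + -1 * e v) by lra.
have [norm1 normN1] : `|1 : R| <= 1 /\ `|-1 : R| <= 1 by rewrite normrN normr1.
by move=> u; have [] := x_ext _ _ _ (shift _ norm1) (shift _ normN1) half mid u; lra.
Qed.

Lemma Cfam_seq1 (D : seq N -> {set {set N}}) r S : Cfam [:: r] D S <-> S \in D r.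
Proof.
split=> [[f [fD ->]] | DS]; first by rewrite big_seq1; apply: fD; rewrite mem_seq1.
exists (fun _ => S); split=> [r' | ]; last by rewrite big_seq1.
by rewrite mem_seq1 => /eqP ->.
Qed.

End Polytopes.

Section SegmentPolytope.
Variables (R : realType) (N : finType) (r : seq N) (C : {set N} -> Prop).
Hypotheses (r_uniq : uniq r) (C_seg : forall S, C S -> is_seg r S).
Implicit Type x : N -> R.

Lemma extreme_point01_off_path x j : extreme_point (Upoly C) x -> j \notin r ->
  x j = 0 \/ x j = 1.
Proof.
move=> x_ext j_r; have [[x01 Cx] _] := x_ext.
have min_ge0 u : 0 <= Num.min (x u) (1 - x u).
  by rewrite le_min subr_ge0; case/andP: (x01 u) => -> ->.
pose e u := if u == j then Num.min (x j) (1 - x j) else 0.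
have : e j = 0.
  apply: (extreme_point_perturb x_ext) => [u | S CS].
    by rewrite /e; case: eqP => [-> | _]; rewrite ?ger0_norm ?normr0.
  have [a [b [_ S_seg]]] := C_seg CS; have := Cx S CS.
  rewrite S_seg => Sx_ge1; rewrite [X in `|X|]big1 ?normr0 ?subr_ge0 // => u.
  rewrite inE => /andP[u_r _].
  by rewrite /e; case: eqP u_r => // ->; rewrite (negbTE j_r).
rewrite /e eqxx; case: (lerP (x j) (1 - x j)) => _ xj0; [by left | right; lra].
Qed.

Lemma extreme_point_int_on_path x j : extreme_point (Upoly C) x -> j \in r ->
  exists z : int, x j = z%:~R.
Proof.
move=> x_ext j_r; have [[x01 Cx] _] := x_ext.
pose ps k := \sum_(0 <= p < k) x (nth j r p).
have x_ps p : x (nth j r p) = ps p.+1 - ps p.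
  by rewrite /ps big_nat_recr //= addrC addrK.
have seg_ps a b : (a <= b <= size r)%N -> \sum_(u in seg r a b) x u = ps b - ps a.
  move=> /andP[ab b_le]; rewrite (sum_seg r_uniq j) // /ps.
  by rewrite (big_cat_nat (leq0n a) ab) /= addrC addrK.
pose e u := if u \in r
  then dist_int (ps (index u r).+1) - dist_int (ps (index u r)) else 0.
have e_nth p : (p < size r)%N ->
    e (nth j r p) = dist_int (ps p.+1) - dist_int (ps p).
  by move=> p_lt; rewrite /e mem_nth // index_uniq.
have seg_e a b : (a <= b <= size r)%N ->
    \sum_(u in seg r a b) e u = dist_int (ps b) - dist_int (ps a).
  move=> /andP[ab b_le]; rewrite (sum_seg r_uniq j) //.
  apply: (telescope_sumr_eq (fun k => dist_int (ps k))) => // k /andP[_ kb].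
  by apply: e_nth; lia.
have e0 : forall u, e u = 0.
  apply: (extreme_point_perturb x_ext) => [u | S CS].
    rewrite /e; case: ifP => u_r; last by rewrite normr0 le_min subr_ge0.
    rewrite -(nth_index j u_r) x_ps index_uniq ?index_mem //.
    apply: dist_int_step; rewrite -x_ps; exact: x01.
  have [a [b [ab S_seg]]] := C_seg CS; have := Cx S CS.
  rewrite S_seg seg_e // seg_ps // => /dist_int_far; lra.
have ps_int k : (k <= size r)%N -> dist_int (ps k) = 0.
  elim: k => [|k IH] k_le; first by rewrite /ps big_geq // dist_int0.
  by have := e0 (nth j r k); rewrite e_nth // IH ?subr0 //; apply: ltnW.
have i_lt : (index j r < size r)%N by rewrite index_mem.
have [n1 n1E] := dist_int_eq0 (ps_int _ i_lt).
have [n0 n0E] := dist_int_eq0 (ps_int _ (ltnW i_lt)).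
by exists (n1 - n0); rewrite -(nth_index j j_r) x_ps n1E n0E intrB.
Qed.

Lemma seg_polytope_integral : integral_polytope (@Upoly R N C).
Proof.
move=> x x_ext j; have [j_r | j_r] := boolP (j \in r).
  exact: extreme_point_int_on_path.
by have [-> | ->] := extreme_point01_off_path x_ext j_r; [exists 0 | exists 1].
Qed.

End SegmentPolytope.

Section SegmentCover.
Variables (R : realType) (N : finType) (ell : N -> N -> R) (d : R).
Variables (v0 : N) (rest : seq N) (D : {set {set N}}).
Local Notation r := (v0 :: rest).
Hypothesis r_uniq : uniq r.
Hypothesis D_traversable : forall x : N -> bool,
  rep_traversable ell d r x <->
  (forall S, S \in D -> (1 <= \sum_(j in S) (x j : nat))%N).

Lemma member_not_traversable (S : {set N}) : S \in D ->
  ~ rep_traversable ell d r (fun u => u \notin S).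
Proof. by move=> SD /D_traversable /(_ S SD); rewrite big1 // => u ->. Qed.

Lemma not_traversable_member_sub (J : {set N}) :
  ~ rep_traversable ell d r (fun u => u \notin J) -> exists2 S, S \in D & S \subset J.
Proof.
move=> not_trav.
have [/exists_inP[S SD SJ] | no_S] := boolP [exists S in D, S \subset J].
  by exists S.
case: not_trav; apply/D_traversable => S SD.
have /subsetPn[u uS uJ] : ~~ (S \subset J).
  by apply: contraNN no_S => SJ; apply/exists_inP; exists S.
by rewrite (bigD1 u) //= uJ.
Qed.

Lemma seg_cover (S : {set N}) : S \in D ->
  exists2 J, is_seg r J /\ (exists2 S', S' \in D & S' \subset J) & J \subset S.
Proof.
move=> SD; have not_trav := member_not_traversable SD.
suff [a [b [ab_le [JS J_not_trav]]]] : exists a b, (a <= b <= size r)%N /\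
    seg r a b \subset S /\ ~ rep_traversable ell d r (fun u => u \notin seg r a b).
  exists (seg r a b) => //; split; first by exists a, b.
  exact: not_traversable_member_sub.
have [/hasP[u u_r uS] | /hasPn r_in_S] := boolP (has [pred u | u \notin S] r);
    last first.
  exists 0%N, (size r); split; first by rewrite leq0n leqnn.
  split=> [| [[u u_r]]]; last by rewrite inE u_r index_mem u_r.
  by apply/subsetP => u; rewrite inE => /andP[/r_in_S]; rewrite negbK.
have [i [j [ij [Si [Sj [between far]]]]]] : exists i j, (i < j)%N /\
    rt_node v0 rest i \notin S /\ rt_node v0 rest j \notin S /\
    (forall k, (i < k < j)%N -> ~~ (rt_node v0 rest k \notin S)) /\
    ~ rt_dist ell v0 rest i j <= d.
  apply: NNPP => no_gap; apply: not_trav; split; first by exists u.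
  move=> i j ij Si Sj between; apply: NNPP => far; apply: no_gap.
  by exists i, j.
have [a [b [ab_le segP]]] := rt_window_seg i.+1 (j - i.+1) r_uniq.
have JS : seg r a b \subset S.
  apply/subsetP => w /segP[k k_win <-].
  by rewrite -[_ \in S]negbK between //; lia.
exists a, b; split=> //; split=> // -[_ trav]; apply: far; apply: trav => //.
- by apply: contra Si; apply/subsetP.
- by apply: contra Sj; apply/subsetP.
- by move=> k k_win; rewrite negbK; apply/segP; exists k => //; lia.
Qed.

End SegmentCover.

Theorem lemma3 (R : realType) (N : finType) (A : rel N) (ell : N -> N -> R) (d : R)
  (Q : finType) (Rq : Q -> seq (seq N)) (D : Q -> seq N -> {set {set N}})
  (hA : symmetric A)
  (hell_pos : forall u v, A u v -> 0 < ell u v)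
  (hell_sym : forall u v, ell u v = ell v u)
  (hd : 0 < d)
  (hell_d : forall u v, A u v -> ell u v <= d)
  (hRq_ne : forall q, Rq q != [::])
  (hRq_path : forall q r, r \in Rq q -> is_path A r)
  (hD : forall q r, r \in Rq q -> forall x : N -> bool,
          rep_traversable ell d r x <->
          (forall S, S \in D q r -> (1 <= \sum_(j in S) (x j : nat))%N))
  (q : Q) (r : seq N) (hq : Rq q = [:: r]) (hsimple : uniq r) :
  @integral_polytope R N (@Upoly R N (Cfam (Rq q) (D q))).
Proof.
have r_in : r \in Rq q by rewrite hq mem_seq1.
have := hRq_path q r r_in; have := hD q r r_in.
case: r hq hsimple r_in => [|v0 rest] // hq r_uniq _ D_trav _.
pose segs J := is_seg (v0 :: rest) J /\ exists2 S, S \in D q (v0 :: rest) & S \subset J.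
apply: (@integral_polytope_ext _ _ (Upoly segs)); last first.
  by apply: (seg_polytope_integral r_uniq) => J [].
rewrite hq => x; split; apply: Upoly_refine.
  by move=> S /Cfam_seq1 SD; exact: (seg_cover r_uniq D_trav).
by move=> J [_ [S SD SJ]]; exists S => //; apply/Cfam_seq1.
Qed.
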